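(* Let $G$ be a finite simple graph and let $k\ge 1$ and $c\ge 2$ be integers. For any positive integer $r$, if $G$ has a weak $kr$-guidance system of maximum outdegree at most $c$, then the $k$-distance power $G^k$ has a weak $r$-guidance system of maximum outdegree at most $2c^k$.
   Context: All graphs are finite, simple and undirected. An orientation of $G$ is a directed graph $\vec{H}$ on $V(G)$ such that every $(u,v)\in E(\vec{H})$ satisfies $uv\in E(G)$, and for every $uv\in E(G)$ at least one of $(u,v),(v,u)$ lies in $E(\vec{H})$ (both are allowed). A partial orientation of $G$ is a spanning directed subgraph of an orientation of $G$ (so each edge may be directed in neither, one, or both directions). For a partial orientation $\vec{H}$, $B_{\vec{H}}(v,a)$ denotes the set of vertices reachable from $v$ by a directed path in $\vec{H}$ of length at most $a$. A weak $r$-guidance system of $G$ is a partial orientation $\vec{H}$ of $G$ such that for any distinct vertices $u,v$ at distance $\ell\le r$ in $G$ there exist non-negative integers $a,b$ with $a+b=\ell-1$ such that $G$ contains an edge between $B_{\vec{H}}(u,a)$ and $B_{\vec{H}}(v,b)$. The $k$-distance power $G^k$ is the graph on $V(G)$ in which two distinct vertices are adjacent iff their distance in $G$ is at most $k$. *)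

From mathcomp Require Import all_boot.
Set Implicit Arguments. Unset Strict Implicit. Unset Printing Implicit Defensive.

Fixpoint reach_le (T : finType) (R : rel T) (u v : T) (n : nat) : bool :=
  match n with
  | 0 => u == v
  | n'.+1 => (u == v) || [exists w, R u w && reach_le R w v n']
  end.

Definition dist_is (T : finType) (e : rel T) (u v : T) (l : nat) : Prop :=
  reach_le e u v l /\ (forall m, m < l -> ~~ reach_le e u v m).

Definition simple_graph (T : finType) (e : rel T) : Prop :=
  symmetric e /\ irreflexive e.

Definition partial_orientation (T : finType) (e h : rel T) : Prop :=
  forall u v, h u v -> e u v.

Definition ball (T : finType) (h : rel T) (v : T) (a : nat) : {set T} :=
  [set x | reach_le h v x a].

Definition max_outdeg_le (T : finType) (h : rel T) (c : nat) : Prop :=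
  forall u, #|[set v | h u v]| <= c.

Definition weak_guidance (T : finType) (e : rel T) (r : nat) (h : rel T) : Prop :=
  partial_orientation e h /\
  forall u v l, u != v -> l <= r -> dist_is e u v l ->
    exists a b, a + b = l.-1 /\
      exists x y, [/\ x \in ball h u a, y \in ball h v b & e x y].

Definition gpower (T : finType) (e : rel T) (k : nat) : rel T :=
  fun u v => (u != v) && reach_le e u v k.

(* Take the k-th power H^k of the guidance system H of G.  Its out-neighbours
   lie in an H-ball of radius k, so there are fewer than 2c^k of them.  If u, v
   are at distance l <= r in G^k, they are at distance L <= kl in G, so H yields
   an edge xy with x in B_H(u,a), y in B_H(v,b), a + b = L - 1.  Dividing a and b
   by k with remainders ra, rb gives points x', y' of B_{H^k}(u,a/k) and
   B_{H^k}(v,b/k) joined by a G-walk of length ra + 1 + rb; when this exceeds k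
   we use x itself, which lies in B_{H^k}(u, a/k + 1).  Either way we obtain
   points of H^k-balls of total radius at most l - 1 at G-distance at most k.
   They are adjacent in G^k unless they coincide, and then the last arc of the
   H^k-walk reaching the common point is the required G^k-edge. *)
From mathcomp Require Import all_boot zify.

Set Implicit Arguments.
Unset Strict Implicit.
Unset Printing Implicit Defensive.

Section Reach.

Variable T : finType.
Implicit Types (R S : rel T) (u v w x y : T).

Lemma reach_le_refl R u n : reach_le R u u n.
Proof. by case: n => [|n] /=; rewrite eqxx. Qed.

Lemma reach_le_step R u w v n : R u w -> reach_le R w v n -> reach_le R u v n.+1.
Proof. by move=> Ruw Rwv; apply/orP; right; apply/existsP; exists w; rewrite Ruw. Qed.

Lemma reach_leSP R u v n :
  reach_le R u v n.+1 -> u = v \/ exists2 w, R u w & reach_le R w v n.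
Proof. by case/orP => [/eqP | /existsP [w /andP [Ruw Rwv]]]; [left | right; exists w]. Qed.

Lemma reach_le_edge R u v : R u v -> reach_le R u v 1.
Proof. by move=> Ruv; apply: reach_le_step Ruv (reach_le_refl _ _ _). Qed.

Lemma reach_leS R u v n : reach_le R u v n -> reach_le R u v n.+1.
Proof.
elim: n u => [|n IHn] u; first by move=> /eqP->; apply: reach_le_refl.
case/reach_leSP => [-> | [w Ruw Rwv]]; first exact: reach_le_refl.
exact: reach_le_step Ruw (IHn w Rwv).
Qed.

Lemma reach_le_mono R u v m n : m <= n -> reach_le R u v m -> reach_le R u v n.
Proof.
move=> /subnKC <- Ruv; elim: (n - m) => [|d IHd]; first by rewrite addn0.
by rewrite addnS; apply: reach_leS.
Qed.

Lemma reach_le_cat R u w v m n :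
  reach_le R u w m -> reach_le R w v n -> reach_le R u v (m + n).
Proof.
elim: m u => [|m IHm] u; first by move=> /eqP->.
case/reach_leSP => [-> | [z Ruz Rzw]] Rwv.
  by apply: reach_le_mono Rwv; rewrite leq_addl.
exact: reach_le_step Ruz (IHm z Rzw Rwv).
Qed.

Lemma reach_le_split R u v m n :
  reach_le R u v (m + n) -> exists2 w, reach_le R u w m & reach_le R w v n.
Proof.
elim: m u => [|m IHm] u Ruv; first by exists u; rewrite ?reach_le_refl.
case/reach_leSP: Ruv => [<- | [z Ruz Rzv]]; first by exists u; apply: reach_le_refl.
have [w Rzw Rwv] := IHm z Rzv.
by exists w => //; apply: reach_le_step Ruz Rzw.
Qed.

Lemma reach_le_sub R S u v n : subrel R S -> reach_le R u v n -> reach_le S u v n.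
Proof.
move=> RS; elim: n u => [|n IHn] u //.
case/reach_leSP => [-> | [w Ruw Rwv]]; first exact: reach_le_refl.
exact: reach_le_step (RS _ _ Ruw) (IHn w Rwv).
Qed.

Lemma reach_le_sym R u v n : symmetric R -> reach_le R u v n -> reach_le R v u n.
Proof.
move=> symR; elim: n u => [|n IHn] u; first by rewrite /= eq_sym.
case/reach_leSP => [-> | [z Ruz Rzv]]; first exact: reach_le_refl.
by rewrite -addn1; apply: reach_le_cat (IHn z Rzv) _; apply: reach_le_edge; rewrite symR.
Qed.

Lemma reach_le_gt0 R u v n : reach_le R u v n -> u != v -> 0 < n.
Proof. by case: n => // /eqP->; rewrite eqxx. Qed.

Lemma reach_le_last R u v n :
  reach_le R u v n -> u != v -> exists2 w, reach_le R u w n.-1 & R w v.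
Proof.
elim: n u => [|n IHn] u; first by move=> /eqP->; rewrite eqxx.
case/reach_leSP => [-> | [z Ruz Rzv]] uv; first by rewrite eqxx in uv.
have [<- | zv] := eqVneq z v; first by exists u; rewrite ?reach_le_refl.
have n_gt0 := reach_le_gt0 Rzv zv.
have [w Rzw Rwv] := IHn z Rzv zv; exists w => //.
by rewrite -(prednK n_gt0); apply: reach_le_step Ruz Rzw.
Qed.

Lemma dist_is_exists R u v n : reach_le R u v n -> exists2 l, dist_is R u v l & l <= n.
Proof.
move=> Ruv; have [l Rl l_min] := ex_minnP (ex_intro (reach_le R u v) n Ruv).
exists l; last exact: l_min.
by split=> // m m_lt; apply/negP => /l_min; rewrite leqNgt m_lt.
Qed.

Lemma ball_mono R u a b : a <= b -> {subset ball R u a <= ball R u b}.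
Proof. by move=> ab x; rewrite !inE; apply: reach_le_mono. Qed.

Lemma ball_divn R u x a k :
  x \in ball R u a -> exists2 y, y \in ball R u (k * (a %/ k)) & reach_le R y x (a %% k).
Proof.
rewrite inE {1}(divn_eq a k) mulnC => /reach_le_split [y uy yx].
by exists y; rewrite ?inE.
Qed.

Lemma leq_card_bigcup (I : finType) (P : pred I) (F : I -> {set T}) :
  #|\bigcup_(i | P i) F i| <= \sum_(i | P i) #|F i|.
Proof.
elim/big_rec2: _ => [|i A s _ IH]; first by rewrite cards0.
by rewrite cardsU; apply: leq_trans (leq_subr _ _) _; rewrite leq_add2l.
Qed.

Lemma card_ball_lt R c n u : 2 <= c -> max_outdeg_le R c -> #|ball R u n| < 2 * c ^ n.
Proof.
move=> c_ge2 degR; elim: n u => [|n IHn] u.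
  by rewrite (_ : ball R u 0 = [set u]) ?cards1 //; apply/setP => x; rewrite !inE eq_sym.
set N := [set w | R u w].
have ball_sub : ball R u n.+1 \subset u |: \bigcup_(w in N) ball R w n.
  apply/subsetP => x; rewrite inE => /reach_leSP [<- | [w Ruw Rwx]]; first exact: setU11.
  by rewrite setU1r //; apply/bigcupP; exists w; rewrite !inE.
have sum_le : \sum_(w in N) #|ball R w n| <= #|N| * (2 * c ^ n).-1.
  by rewrite -sum_nat_const; apply: leq_sum => w _; have := IHn w; lia.
have card_le : #|ball R u n.+1| <= 1 + c * (2 * c ^ n).-1.
  apply: leq_trans (subset_leq_card ball_sub) _; rewrite cardsU1 leq_add ?leq_b1 //.
  apply: leq_trans (leq_card_bigcup _ _) (leq_trans sum_le _).
  exact: leq_mul (degR u) _.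
have : 0 < c ^ n by rewrite expn_gt0; lia.
by move: card_le; rewrite expnS; move: (c ^ n) => p; nia.
Qed.

Lemma gpower_sub R S k : subrel R S -> subrel (gpower R k) (gpower S k).
Proof. by move=> RS u v /andP [uv Ruv]; rewrite /gpower uv (reach_le_sub RS). Qed.

Lemma gpower_sym R k : symmetric R -> symmetric (gpower R k).
Proof.
move=> symR u v; rewrite /gpower eq_sym; case: eqP => //= _.
by apply/idP/idP; apply: reach_le_sym.
Qed.

Lemma reach_le_gpower R k u v i : reach_le (gpower R k) u v i = reach_le R u v (k * i).
Proof.
apply/idP/idP; elim: i u => [|i IHi] u; rewrite ?muln0 // mulnS.
- case/reach_leSP => [-> | [w /andP [_ Ruw] Rwv]]; first exact: reach_le_refl.
  exact: reach_le_cat Ruw (IHi w Rwv).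
- case/reach_le_split => w Ruw Rwv; have [-> | uw] := eqVneq u w.
    exact/reach_leS/IHi.
  by apply: (reach_le_step (w := w)); rewrite ?IHi // /gpower uw.
Qed.

Lemma ball_gpower R k u i : ball (gpower R k) u i = ball R u (k * i).
Proof. by apply/setP => x; rewrite !inE reach_le_gpower. Qed.

Lemma max_outdeg_gpower R c k :
  2 <= c -> max_outdeg_le R c -> max_outdeg_le (gpower R k) (2 * c ^ k).
Proof.
move=> c_ge2 degR u; apply: leq_trans (ltnW (card_ball_lt k u c_ge2 degR)).
by apply/subset_leq_card/subsetP => v; rewrite !inE => /andP [].
Qed.

End Reach.

Section Guidance.

Variables (T : finType) (e h : rel T).
Hypotheses (symE : symmetric e) (hE : subrel h e).

Definition guided (u v : T) (n : nat) : Prop :=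
  exists a b, a + b = n /\
    exists x y, [/\ x \in ball h u a, y \in ball h v b & e x y].

Lemma guided_le u v x y a b n :
  x \in ball h u a -> y \in ball h v b -> e x y -> a + b <= n -> guided u v n.
Proof.
move=> xu yv exy abn; exists a, (n - a); split; first lia.
by exists x, y; split=> //; apply: ball_mono yv; lia.
Qed.

(* A common point p of the two balls is not both u and v, so the last arc of
   the h-walk to p from u or from v is an edge of e between smaller balls. *)
Lemma guided_meet u v p i j n :
  u != v -> p \in ball h u i -> p \in ball h v j -> i + j <= n.+1 -> guided u v n.
Proof.
rewrite !inE => uv pu pv ijn; have [Eup | up] := eqVneq u p.
  subst p; have vu : v != u by rewrite eq_sym.
  have [z vz zu] := reach_le_last pv vu; have j_gt0 := reach_le_gt0 pv vu.
  have euz : e u z by rewrite symE (hE zu).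
  apply: (guided_le (a := 0) (b := j.-1) _ _ euz); last lia.
  - by rewrite inE reach_le_refl.
  - by rewrite inE.
have [z uz zp] := reach_le_last pu up; have i_gt0 := reach_le_gt0 pu up.
by apply: (guided_le (a := i.-1) _ _ (hE zp)); rewrite ?inE //; lia.
Qed.

End Guidance.

Section GuidancePower.

Variables (T : finType) (e h : rel T) (k : nat).
Hypotheses (symE : symmetric e) (hE : subrel h e).

Lemma guided_gpower u v p q i j n :
  u != v -> p \in ball h u (k * i) -> q \in ball h v (k * j) -> reach_le e p q k ->
  i + j <= n -> guided (gpower e k) (gpower h k) u v n.
Proof.
rewrite -!ball_gpower => uv pu qv epq ijn; have [Epq | pq] := eqVneq p q.
  subst q; apply: guided_meet uv pu qv _; [exact: gpower_sym | exact: gpower_sub | lia].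
by apply: guided_le pu qv _ ijn; rewrite /gpower pq.
Qed.

Lemma guided_gpower_of_edge u v x y a b l :
  u != v -> x \in ball h u a -> y \in ball h v b -> e x y -> a + b < k * l ->
  guided (gpower e k) (gpower h k) u v l.-1.
Proof.
move=> uv xu yv exy abl; have k_gt0 : 0 < k by case: k abl.
have [x' ux' x'x] := ball_divn k xu.
have [y' vy' y'y] := ball_divn k yv.
have yy' : reach_le e y y' (b %% k) by apply: reach_le_sym (reach_le_sub hE y'y).
have xy' := reach_le_cat (reach_le_edge exy) yy'.
have x'y' := reach_le_cat (reach_le_sub hE x'x) xy'.
have l_gt0 : 0 < l by case: l abl => //; rewrite muln0.
have index_le i j : k * (i + j) < k * l -> i + j <= l.-1.
  by rewrite ltn_pmul2l //; lia.
have := ltn_pmod a k_gt0; have := ltn_pmod b k_gt0.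
have := divn_eq a k; have := divn_eq b k.
move: (a %/ k) (a %% k) (b %/ k) (b %% k) => a' ra b' rb in ux' x'x vy' y'y yy' xy' x'y' *.
move=> Eb Ea rb_lt ra_lt; have [short | long] := leqP (ra + (1 + rb)) k.
  by apply: guided_gpower uv ux' vy' (reach_le_mono short x'y') (index_le _ _ _); nia.
apply: (guided_gpower (i := a'.+1)) uv (ball_mono _ xu) vy' (reach_le_mono _ xy') _.
all: nia.
Qed.

End GuidancePower.

Theorem lemma5 (T : finType) (e : rel T) (k c r : nat) :
  simple_graph e -> 1 <= k -> 2 <= c -> 0 < r ->
  (exists h : rel T, weak_guidance e (k * r) h /\ max_outdeg_le h c) ->
  exists h' : rel T, weak_guidance (gpower e k) r h' /\ max_outdeg_le h' (2 * c ^ k).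
Proof.
move=> [symE _] _ c_ge2 _ [h [[hE guideH] degH]].
exists (gpower h k); split; last exact: max_outdeg_gpower.
split=> [|u v l uv l_le_r [reach_l _]]; first exact: gpower_sub.
rewrite reach_le_gpower in reach_l.
have [L distL L_le] := dist_is_exists reach_l.
have L_gt0 := reach_le_gt0 distL.1 uv.
have L_le_kr : L <= k * r by apply: leq_trans L_le (leq_mul (leqnn k) l_le_r).
have [a [b [ab [x [y [xu yv exy]]]]]] := guideH u v L uv L_le_kr distL.
by apply: guided_gpower_of_edge xu yv exy _ => //; lia.
Qed.
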